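(* The action of the automorphism group $\mathrm{Aut}(M_7)$ on the moduli space $\mathcal{R}_7$ (equivalently, by birational maps on the quartic surface $Z_7$) is faithful.
   Context: Over $\mathbb{C}$. $M_7$ is the rank-3 matroid on $E=\{1,\dots,7,1',\dots,7'\}$ in which every 3-subset is a basis except the triples $\{a,b,c'\}$ with $a\neq b\in\{1,\dots,7\}$, $a+b\equiv 2c\pmod 7$. $\mathrm{Aut}(M_7)$ is the group of permutations of $E$ mapping bases to bases; identifying $i'$ with $7+i$, it is generated by $(1,7,4,3,6,5,2)(8,14,11,10,13,12,9)$ and $(1,3,5,6,7,2)(8,10,12,13,14,9)$ and is isomorphic to the Frobenius group of order 42. A realization of $M_7$ is a labeled family of 14 distinct lines $(m_e)_{e\in E}$ in $\mathbb{P}^2$ such that three are concurrent iff their labels form a non-basis; $\mathcal{R}_7$ is the moduli space (a surface) of $\mathrm{PGL}_3$-orbits of realizations. $\sigma\in\mathrm{Aut}(M_7)$ acts on realizations by permuting the labels of the lines, which induces an action on $\mathcal{R}_7$. $\mathcal{R}_7$ is a dense open subset of the quartic $Z_7\subset\mathbb{P}^3$: $y_1^2y_2^2+y_1^2y_2y_3-y_1y_2^2y_3-y_1y_2y_3^2-y_1^2y_2y_4-y_1y_2^2y_4+y_1y_2y_3y_4-y_2y_3^2y_4+y_1y_2y_4^2+y_3^2y_4^2=0$. *)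

From HB Require Import structures.
From mathcomp Require Import all_boot all_order all_algebra all_fingroup.
From mathcomp Require Import reals complex.
Set Implicit Arguments. Unset Strict Implicit. Unset Printing Implicit Defensive.
Import GRing.Theory.
Local Open Scope ring_scope.

(* Ground set E = {1,...,7,1',...,7'} encoded as 'I_14:
   label i (1<=i<=7) is the ordinal i-1, label i' = 7+i is the ordinal 7+i-1. *)

Definition M7_nonbasis (B : {set 'I_14}) : bool :=
  [exists i : 'I_14, exists j : 'I_14, exists k : 'I_14,
    [&& (i < 7)%N, (j < 7)%N, i != j, (7 <= k)%N,
        ((i.+1 + j.+1) %% 7 == (2 * (k.+1 - 7)) %% 7)%N
      & B == [set i; j; k]]].

Definition M7_basis (B : {set 'I_14}) : bool :=
  (#|B| == 3)%N && ~~ M7_nonbasis B.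

Definition M7_aut (s : {perm 'I_14}) : bool :=
  [forall B : {set 'I_14}, M7_basis B ==> M7_basis (s @: B)].

(* A labelled family of lines in P^2 over F: line m e = {x | m e *m x = 0}. *)
Definition lines_concurrent (F : fieldType) (m : 'I_14 -> 'rV[F]_3)
    (a b c : 'I_14) : Prop :=
  exists p : 'cV[F]_3, p != 0 /\
    [/\ m a *m p = 0, m b *m p = 0 & m c *m p = 0].

Definition M7_realization (F : fieldType) (m : 'I_14 -> 'rV[F]_3) : Prop :=
  [/\ forall e, m e != 0,
      forall e f, e != f -> ~ (exists c : F, m e = c *: m f)
    & forall a b c, a != b -> b != c -> a != c ->
        (lines_concurrent m a b c <-> M7_nonbasis [set a; b; c])].

(* Same PGL_3-orbit (same point of the moduli space R_7). *)
Definition PGL3_equiv (F : fieldType) (m m' : 'I_14 -> 'rV[F]_3) : Prop :=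
  exists A : 'M[F]_3, A \in unitmx /\
    exists lam : 'I_14 -> F, (forall e, lam e != 0) /\
      forall e, m' e = lam e *: (m e *m A).

Definition relabel (F : fieldType) (s : {perm 'I_14}) (m : 'I_14 -> 'rV[F]_3) :
  'I_14 -> 'rV[F]_3 := fun e => m ((s^-1)%g e).

(* A projective change of coordinates multiplies each 3x3 minor
   D(a,b,c) = det(m_a, m_b, m_c) of a realization m by lam_a lam_b lam_c det A.
   So if relabelling by s fixes the point of R_7 given by m, then t = s^-1 maps
   triples with vanishing minor to triples with vanishing minor, and preserves
   D(7,0,1) D(7,8,9) / (D(7,0,8) D(7,1,9)), in which all the factors cancel.
   Take for m an explicit realization m0 with integer coordinates.  Two of
   its lines lie in at most one concurrent triple, so t is determined by t 0,
   t 1, t 2 through third lines of concurrent triples; a computation over the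
   14^3 candidates shows that only the identity is injective and preserves the
   invariant. *)

From Stdlib Require Import ZArith.
From HB Require Import structures.
From mathcomp Require Import all_boot all_order all_algebra all_fingroup.
From mathcomp Require Import reals complex.
From mathcomp Require Import ssrZ ring.
Set Implicit Arguments.
Unset Strict Implicit.
Unset Printing Implicit Defensive.

Import GRing.Theory Num.Theory.
Local Open Scope ring_scope.

Section Sarrus.
Variable R : comPzRingType.

Definition sarrus (a : nat -> nat -> R) : R :=
  a 0%N 0%N * (a 1%N 1%N * a 2%N 2%N - a 1%N 2%N * a 2%N 1%N)
  - a 0%N 1%N * (a 1%N 0%N * a 2%N 2%N - a 1%N 2%N * a 2%N 0%N)
  + a 0%N 2%N * (a 1%N 0%N * a 2%N 1%N - a 1%N 1%N * a 2%N 0%N).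

Lemma det_mx33 (M : 'M[R]_3) : \det M = sarrus (fun i j => M (inord i) (inord j)).
Proof.
pose a i j := M (inord i) (inord j); rewrite -/a.
have aE (i j : 'I_3) : M i j = a i j by rewrite /a !inord_val.
rewrite (expand_det_row _ 0) !big_ord_recl big_ord0 /cofactor.
rewrite !(expand_det_row _ 0) !big_ord_recl !big_ord0 /cofactor !det_mx11 !mxE.
by rewrite !aE /sarrus /=; ring.
Qed.

End Sarrus.

Lemma rmorph_sarrus (R S : comPzRingType) (f : {rmorphism R -> S}) a :
  f (sarrus a) = sarrus (fun i j => f (a i j)).
Proof. by rewrite /sarrus !(rmorphB, rmorphD, rmorphM). Qed.

Section TripleMatrices.
Variable F : fieldType.

Definition triple_mx (I : Type) (m : I -> 'rV[F]_3) (a b c : I) : 'M[F]_3 :=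
  \matrix_(i < 3) m (nth a [:: a; b; c] i).

Lemma triple_mx_comp (I J : Type) (m : J -> 'rV[F]_3) (f : I -> J) a b c :
  triple_mx (m \o f) a b c = triple_mx m (f a) (f b) (f c).
Proof.
apply/row_matrixP => i; rewrite !rowK /=.
by rewrite -[[:: f a; f b; f c]]/(map f [:: a; b; c]) (nth_map a) ?size_map.
Qed.

Lemma triple_mx_mulmx_eq0 (I : Type) (m : I -> 'rV[F]_3) a b c (p : 'cV[F]_3) :
  triple_mx m a b c *m p = 0 <-> [/\ m a *m p = 0, m b *m p = 0 & m c *m p = 0].
Proof.
split=> [mp0 | [ap0 bp0 cp0]].
  by split; [move: (congr1 (row 0) mp0) | move: (congr1 (row 1) mp0)
            | move: (congr1 (row 2) mp0)]; rewrite row_mul rowK row0.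
by apply/row_matrixP => -[[|[|[|//]]] lti]; rewrite row_mul rowK row0.
Qed.

Lemma lines_concurrentP (m : 'I_14 -> 'rV[F]_3) a b c :
  lines_concurrent m a b c <-> \det (triple_mx m a b c) = 0.
Proof.
rewrite -det_tr; split=> [[p [p_neq0 /triple_mx_mulmx_eq0 mp0]] | ].
  apply/eqP/det0P; exists p^T; first by rewrite trmx_eq0.
  by rewrite -trmx_mul mp0 trmx0.
move=> /eqP /det0P [v v_neq0 vM0]; exists v^T; split; first by rewrite trmx_eq0.
by apply/triple_mx_mulmx_eq0; rewrite -[LHS]trmxK trmx_mul trmxK vM0 trmx0.
Qed.

Lemma det_triple_mx_proportional (I : Type) (m : I -> 'rV[F]_3) e f g k :
  m e = k *: m f -> \det (triple_mx m e f g) = 0.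
Proof.
move=> mef; apply/eqP/det0P; exists (\row_j (nth 0 [:: 1; - k; 0] j)).
  by apply/eqP => /rowP /(_ 0); rewrite !mxE => /eqP; rewrite oner_eq0.
rewrite mulmx_sum_row !big_ord_recl big_ord0 !rowK !mxE /= mef.
by rewrite scale1r scaleNr scale0r !addr0 subrr.
Qed.

Lemma det_triple_mx_transform (I : Type) (m m' : I -> 'rV[F]_3) (lam : I -> F)
    (A : 'M[F]_3) a b c :
  (forall e, m' e = lam e *: (m e *m A)) ->
  \det (triple_mx m' a b c)
  = lam a * lam b * lam c * \det A * \det (triple_mx m a b c).
Proof.
move=> m'E; pose d : 'rV_3 := \row_i lam (nth a [:: a; b; c] i).
have -> : triple_mx m' a b c = diag_mx d *m triple_mx m a b c *m A.
  apply/matrixP => i j; rewrite mul_diag_mx !mxE m'E !mxE mulr_sumr.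
  by apply: eq_bigr => k _; rewrite !mxE mulrA.
rewrite !det_mulmx det_diag !big_ord_recl big_ord0 !mxE /=; ring.
Qed.

End TripleMatrices.

Section ProjectiveInvariants.
Variables (F : fieldType) (m m' : 'I_14 -> 'rV[F]_3).
Hypothesis mm' : PGL3_equiv m m'.
Local Notation D a b c := (\det (triple_mx m a b c)).
Local Notation D' a b c := (\det (triple_mx m' a b c)).

Lemma PGL3_equiv_det_eq0 a b c : (D' a b c == 0) = (D a b c == 0).
Proof.
have [A [A_unit [lam [lam_neq0 m'E]]]] := mm'.
have detA_neq0 : \det A != 0 by rewrite -unitfE -unitmxE.
rewrite (det_triple_mx_transform _ _ _ m'E) !mulf_eq0 !(negbTE (lam_neq0 _)).
by rewrite (negbTE detA_neq0).
Qed.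

Lemma PGL3_equiv_cross_ratio x a b c d :
  D' x a b * D' x c d * D x a c * D x b d = D x a b * D x c d * D' x a c * D' x b d.
Proof.
have [A [_ [lam [_ m'E]]]] := mm'.
by rewrite !(det_triple_mx_transform _ _ _ m'E); ring.
Qed.

End ProjectiveInvariants.

Local Open Scope Z_scope.
Definition m0_coords : seq (seq Z) := [::
  [:: -3850; -151250; 1]; [:: 3850; -108900; 343];
  [:: 2772; 379456; 1]; [:: -39600; 302500; 729];
  [:: -9900; -1225125; 64]; [:: 880; -14080; 1];
  [:: 20; 1400; 1]; [:: 15840; 3097600; 1];
  [:: -800800; -10224500; 343]; [:: 286; -3388; 1];
  [:: -9900; 55000; 729]; [:: 3080; -266805; 512];
  [:: 100100; 9680000; 2197]; [:: -450; -52650; 1]].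
Local Close Scope Z_scope.

Definition m0_coord (e j : nat) : Z := nth Z0 (nth [::] m0_coords e) j.

Definition m0_det (a b c : nat) : Z :=
  sarrus (fun i j => m0_coord (nth a [:: a; b; c] i) j).

(* Labels are enumerated as nats: [vm_compute] gets stuck on enumerations of
   ['I_14], whose [insub] goes through the opaque [idP]. *)
Definition labels : seq nat := iota 0 14.

Definition forall_labels3 (P : nat -> nat -> nat -> bool) : bool :=
  all (fun a => all (fun b => all (P a b) labels) labels) labels.

Lemma forall_labels3P P a b c :
  forall_labels3 P -> (a < 14)%N -> (b < 14)%N -> (c < 14)%N -> P a b c.
Proof.
have labelsP n : (n < 14)%N -> n \in labels by rewrite mem_iota.
move=> PP /labelsP a14 /labelsP b14 /labelsP c14.
exact: allP (allP (allP PP a a14) b b14) c c14.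
Qed.

Definition nonbasis_triple (i j k : nat) : bool :=
  [&& i < 7, j < 7, i != j, 7 <= k & (i.+1 + j.+1) %% 7 == (2 * (k.+1 - 7)) %% 7]%N.

Definition nonbasis_among (s : seq nat) : bool :=
  has (fun i => has (fun j => has (nonbasis_triple i j) s) s) s.

Lemma set3E (T : finType) (x y z : T) : [set x; y; z] = [set u in [:: x; y; z]].
Proof. by apply/setP => u; rewrite !inE orbA. Qed.

Lemma M7_nonbasis_set3 (a b c : 'I_14) :
  M7_nonbasis [set a; b; c] = nonbasis_among [seq val x | x <- [:: a; b; c]].
Proof.
apply/existsP/hasP => [[i /existsP [j /existsP [k]]] | ].
  case/and5P=> i7 j7 ij k7 /andP [ijk /eqP abcE].
  have abc x : x \in [set i; j; k] -> val x \in [seq val x | x <- [:: a; b; c]].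
    by rewrite -abcE set3E inE => /(map_f val).
  exists (val i); first by apply: abc; rewrite !inE eqxx.
  apply/hasP; exists (val j); first by apply: abc; rewrite !inE eqxx orbT.
  apply/hasP; exists (val k); first by apply: abc; rewrite !inE eqxx !orbT.
  by apply/and5P.
case=> _ /mapP [i ai ->] /hasP [_ /mapP [j aj ->] /hasP [_ /mapP [k ak ->]]].
case/and5P=> i7 j7 ij k7 ijk.
exists i; apply/existsP; exists j; apply/existsP; exists k.
rewrite i7 j7 ij k7 ijk /= eq_sym eqEcard !set3E !cardsE.
have ik : i != k by rewrite -val_eqE neq_ltn (leq_trans i7 k7).
have jk : j != k by rewrite -val_eqE neq_ltn (leq_trans j7 k7).
have /card_uniqP -> : uniq [:: i; j; k] by rewrite /= !inE negb_or ij ik jk.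
rewrite card_size andbT; apply/subsetP => x.
rewrite !in_set => /[!inE] /or3P [] /eqP ->;
  [move: ai | move: aj | move: ak]; by rewrite !inE.
Qed.

Lemma m0_concurrent_triples :
  forall_labels3 (fun a b c => [&& a != b, b != c & a != c] ==>
    ((m0_det a b c == 0) == nonbasis_among [:: a; b; c])).
Proof. by vm_compute. Qed.

Lemma m0_independent_pairs :
  all (fun e => all (fun f => (e != f) ==> has (fun g => m0_det e f g != 0) labels)
    labels) labels.
Proof. by vm_compute. Qed.

Section IntegralRealization.
Variable F : numFieldType.

Definition m0 (e : 'I_14) : 'rV[F]_3 := \row_j (int_of_Z (m0_coord e j))%:~R.

Lemma int_of_Z_intr_eq0 (z : Z) : ((int_of_Z z)%:~R == 0 :> F) = (z == 0).
Proof. by rewrite intr_eq0 (raddf_eq0 _ (can_inj int_of_ZK)). Qed.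

Lemma int_of_Z_intr_inj : injective (fun z : Z => (int_of_Z z)%:~R : F).
Proof.
move=> x y /eqP; rewrite -subr_eq0 -intrB -rmorphB int_of_Z_intr_eq0 subr_eq0.
by move/eqP.
Qed.

Lemma det_m0 (a b c : 'I_14) :
  \det (triple_mx m0 a b c) = (int_of_Z (m0_det a b c))%:~R.
Proof.
rewrite det_mx33 -[RHS]/((intr \o int_of_Z) (m0_det a b c)) rmorph_sarrus.
by rewrite /sarrus /= !mxE !inordK.
Qed.

Lemma m0_realization : M7_realization m0.
Proof.
have labels_val (e : 'I_14) : val e \in labels by rewrite mem_iota ltn_ord.
have m0_indep e f : e != f -> ~ exists k, m0 e = k *: m0 f.
  move=> ef [k mef]; move: m0_independent_pairs.
  move/allP/(_ _ (labels_val e))/allP/(_ _ (labels_val f)).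
  rewrite val_eqE ef => /hasP [g]; rewrite mem_iota /= => g14.
  have := det_triple_mx_proportional (inord g) mef.
  by rewrite det_m0 inordK // => /eqP; rewrite int_of_Z_intr_eq0 => /eqP ->.
split=> // [e | a b c ab bc ac].
  apply/eqP => me0; have [f ef] : exists f : 'I_14, e != f.
    by have [-> | e_neq0] := eqVneq e 0; [exists 1 | exists 0].
  by apply: (m0_indep e f ef); exists 0; rewrite me0 scale0r.
rewrite lines_concurrentP det_m0 M7_nonbasis_set3 /=.
have := forall_labels3P m0_concurrent_triples (ltn_ord a) (ltn_ord b) (ltn_ord c).
rewrite !val_eqE ab bc ac => /eqP <-.
by rewrite -int_of_Z_intr_eq0; exact: rwP eqP.
Qed.

End IntegralRealization.

(* Tabulated, so that [vm_compute] evaluates each third point only once. *)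
Definition third_point_table : seq (seq nat) :=
  [seq [seq nth x [seq z <- labels | [&& z != x, z != y & m0_det x y z == 0]] 0
       | y <- labels] | x <- labels].

Definition third_point (x y : nat) : nat := nth x (nth [::] third_point_table x) y.

Lemma m0_third_point_unique :
  forall_labels3 (fun x y z => [&& x != y, z != x, z != y & m0_det x y z == 0] ==>
    (third_point x y == z)).
Proof. by vm_compute. Qed.

(* [vn] is the image of label [n]: it is forced as the third label of a
   concurrent triple of [m0] through two labels whose images are already known. *)
Definition induced_images (a b c : nat) : seq nat :=
  let v11 := third_point a b in
  let v8 := third_point a c in
  let v12 := third_point b c in
  let v6 := third_point c v11 in
  let v3 := third_point a v12 in
  let v10 := third_point a v6 in
  let v7 := third_point b v6 in
  let v9 := third_point b v3 in
  let v5 := third_point b v10 in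
  let v13 := third_point c v3 in
  let v4 := third_point c v10 in
  [:: a; b; c; v3; v4; v5; v6; v7; v8; v9; v10; v11; v12; v13].

Definition m0_cross_ratio_preserved (g : nat -> nat) : bool :=
  m0_det (g 7) (g 0) (g 1) * m0_det (g 7) (g 8) (g 9)
    * m0_det 7 0 8 * m0_det 7 1 9
  == m0_det 7 0 1 * m0_det 7 8 9
    * m0_det (g 7) (g 0) (g 8) * m0_det (g 7) (g 1) (g 9).

Lemma m0_candidates :
  forall_labels3 (fun a b c => let g := induced_images a b c in
    [&& uniq g & m0_cross_ratio_preserved (nth 0 g)] ==> (g == labels)).
Proof. by vm_compute. Qed.

Section Rigidity.
Variable g : nat -> nat.
Hypothesis g_lt : forall n, (n < 14)%N -> (g n < 14)%N.
Hypothesis g_inj : {in labels &, injective g}.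
Hypothesis g_concurrent : forall x y z, (x < 14)%N -> (y < 14)%N -> (z < 14)%N ->
  m0_det x y z = 0 -> m0_det (g x) (g y) (g z) = 0.
Hypothesis g_cross_ratio : m0_cross_ratio_preserved g.

Lemma third_point_image x y z : (x < 14)%N -> (y < 14)%N -> (z < 14)%N ->
  x != y -> z != x -> z != y -> m0_det x y z = 0 -> third_point (g x) (g y) = g z.
Proof.
move=> x14 y14 z14 xy zx zy xyz0.
have g_neq u v : (u < 14)%N -> (v < 14)%N -> u != v -> g u != g v.
  move=> u14 v14; apply: contra => /eqP /g_inj.
  by rewrite !mem_iota u14 v14 => /(_ isT isT) ->.
apply/eqP; move: (forall_labels3P m0_third_point_unique
  (g_lt x14) (g_lt y14) (g_lt z14)).
by rewrite !g_neq ?g_concurrent.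
Qed.

Lemma induced_images_g : induced_images (g 0) (g 1) (g 2) = map g labels.
Proof.
rewrite /induced_images (@third_point_image 0 1 11) ?(@third_point_image 0 2 8)
  ?(@third_point_image 1 2 12) ?(@third_point_image 2 11 6)
  ?(@third_point_image 0 12 3) ?(@third_point_image 0 6 10)
  ?(@third_point_image 1 6 7) ?(@third_point_image 1 3 9)
  ?(@third_point_image 1 10 5) ?(@third_point_image 2 3 13)
  ?(@third_point_image 2 10 4) //.
Qed.

Lemma m0_rigid n : (n < 14)%N -> g n = n.
Proof.
have nth_g k : (k < 14)%N -> nth 0 (map g labels) k = g k.
  by move=> k14; rewrite (nth_map 0) ?nth_iota ?size_iota.
have := forall_labels3P m0_candidates
  (g_lt (n := 0) isT) (g_lt (n := 1) isT) (g_lt (n := 2) isT).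
cbv beta zeta; rewrite induced_images_g map_inj_in_uniq ?iota_uniq //.
rewrite /m0_cross_ratio_preserved !nth_g // -/(m0_cross_ratio_preserved g).
rewrite g_cross_ratio.
by move=> /eqP g_id n14; rewrite -nth_g // g_id nth_iota.
Qed.

End Rigidity.

Section Relabelling.
Variables (F : numFieldType) (s : {perm 'I_14}).
Hypothesis s_fixes_m0 : PGL3_equiv (m0 F) (relabel s (m0 F)).

Lemma det_relabel_m0 (a b c : 'I_14) :
  \det (triple_mx (relabel s (m0 F)) a b c) =
  (int_of_Z (m0_det ((s^-1)%g a) ((s^-1)%g b) ((s^-1)%g c)))%:~R.
Proof. by rewrite -det_m0 -triple_mx_comp. Qed.

Lemma relabel_m0_det_eq0 (a b c : 'I_14) :
  (m0_det ((s^-1)%g a) ((s^-1)%g b) ((s^-1)%g c) == 0) = (m0_det a b c == 0).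
Proof.
rewrite -!(int_of_Z_intr_eq0 F) -det_relabel_m0 -det_m0.
exact: PGL3_equiv_det_eq0.
Qed.

Lemma relabel_m0_cross_ratio (x a b c d : 'I_14) :
  let t := (s^-1)%g in
  m0_det (t x) (t a) (t b) * m0_det (t x) (t c) (t d) * m0_det x a c * m0_det x b d
  = m0_det x a b * m0_det x c d * m0_det (t x) (t a) (t c) * m0_det (t x) (t b) (t d).
Proof.
apply: (@int_of_Z_intr_inj F); rewrite /= !(rmorphM int_of_Z) !intrM.
by rewrite -!det_relabel_m0 -!det_m0; apply: PGL3_equiv_cross_ratio.
Qed.

Lemma relabel_m0_trivial : s = 1%g.
Proof.
pose g n := val ((s^-1)%g (inord n)).
have g_id : forall n, (n < 14)%N -> g n = n.
  apply: m0_rigid => [n _ | x y | x y z x14 y14 z14 /eqP | ]; first exact: ltn_ord.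
  - rewrite !mem_iota => /= x14 y14 /val_inj /perm_inj /(congr1 (@nat_of_ord _)).
    by rewrite !inordK.
  - rewrite -{1}(inordK x14) -{1}(inordK y14) -{1}(inordK z14).
    by rewrite -relabel_m0_det_eq0 => /eqP.
  apply/eqP; move: (relabel_m0_cross_ratio
    (inord 7) (inord 0) (inord 1) (inord 8) (inord 9)).
  by rewrite !inordK.
have sV1 : (s^-1)%g = 1%g.
  apply/permP => e; apply: val_inj; rewrite perm1 -[e in (s^-1)%g e]inord_val.
  exact: g_id.
by rewrite -[s]invgK sV1 invg1.
Qed.

End Relabelling.

Theorem proposition3p4 (R : realType) (s : {perm 'I_14}) :
  M7_aut s ->
  (forall m : 'I_14 -> 'rV[R[i]]_3,
      M7_realization m -> PGL3_equiv m (relabel s m)) ->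
  s = 1%g.
Proof.
move=> _ s_fixes_R7.
exact: relabel_m0_trivial (s_fixes_R7 _ (m0_realization _)).
Qed.
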